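(* Let $\Sigma_A=\{\tau_{1,1},\dots,\tau_{1,a},\alpha_1,\dots,\alpha_p\}$ and $\Sigma_B=\{\tau_{2,1},\dots,\tau_{2,b},\beta_1,\dots,\beta_q\}$ be finite alphabets, and let $\mathcal{L}_A\subseteq\Sigma_A^*$ and $\mathcal{L}_B\subseteq\Sigma_B^*$ be regular languages. Then their Segre product $\mathcal{L}_A\boxtimes\mathcal{L}_B$ is a regular language.
   Context: The alphabets are disjoint and each is partitioned into the ''$\tau$-letters'' ($\tau_{1,1},\dots,\tau_{1,a}$, resp. $\tau_{2,1},\dots,\tau_{2,b}$) and the remaining letters ($\alpha_1,\dots,\alpha_p$, resp. $\beta_1,\dots,\beta_q$). Every word in $\Sigma_A^*$ can be uniquely written as $u_1\alpha_{i_1}u_2\alpha_{i_2}\cdots u_d\alpha_{i_d}u_{d+1}$ with $d\ge 0$, $i_1,\dots,i_d\in[p]$, and each $u_k$ a (possibly empty) word in the letters $\tau_{1,1},\dots,\tau_{1,a}$; similarly every word in $\Sigma_B^*$ is uniquely $v_1\beta_{j_1}\cdots v_d\beta_{j_d}v_{d+1}$ with the $v_k$ words in $\tau_{2,1},\dots,\tau_{2,b}$. The Segre product $\mathcal{L}_A\boxtimes\mathcal{L}_B$ is the language on the alphabet $\{\tau_{1,1},\dots,\tau_{1,a},\tau_{2,1},\dots,\tau_{2,b}\}\cup\{\gamma_{i,j}: i\in[p], j\in[q]\}$ (with $pq+a+b$ letters) consisting of all words $u_1v_1\gamma_{i_1,j_1}u_2v_2\gamma_{i_2,j_2}\cdots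 u_dv_d\gamma_{i_d,j_d}u_{d+1}v_{d+1}$ such that $u_1\alpha_{i_1}u_2\alpha_{i_2}\cdots u_d\alpha_{i_d}u_{d+1}\in\mathcal{L}_A$ and $v_1\beta_{j_1}v_2\beta_{j_2}\cdots v_d\beta_{j_d}v_{d+1}\in\mathcal{L}_B$ (with the same $d$). Regular languages are those in the smallest class containing the languages consisting of a single letter or of the empty word, closed under union, concatenation and Kleene star (equivalently, those recognized by a finite automaton). *)

From mathcomp Require Import all_boot.
Set Implicit Arguments. Unset Strict Implicit. Unset Printing Implicit Defensive.

Definition language (T : Type) := seq T -> Prop.

Inductive regex (T : Type) : Type :=
| RVoid
| REps
| RLit of T
| RAlt of regex T & regex T
| RCat of regex T & regex T
| RStar of regex T.

Arguments RVoid {T}. Arguments REps {T}.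

Fixpoint rlang (T : Type) (r : regex T) : language T :=
  match r with
  | RVoid => fun _ => False
  | REps => fun w => w = [::]
  | RLit x => fun w => w = [:: x]
  | RAlt r1 r2 => fun w => rlang r1 w \/ rlang r2 w
  | RCat r1 r2 => fun w => exists w1 w2, w = w1 ++ w2 /\ rlang r1 w1 /\ rlang r2 w2
  | RStar r1 => fun w => exists ws : seq (seq T),
        w = flatten ws /\ (forall k, k < size ws -> rlang r1 (nth [::] ws k))
  end.

Definition regular (T : Type) (L : language T) : Prop :=
  exists r : regex T, forall w, L w <-> rlang r w.

(* Alphabets:  Sigma_A = {tau_{1,1..a}} + {alpha_{1..p}},
               Sigma_B = {tau_{2,1..b}} + {beta_{1..q}},
   Segre alphabet = ({tau_{1,.}} + {tau_{2,.}}) + {gamma_{i,j}}. *)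
Definition SigmaA (a p : nat) := ('I_a + 'I_p)%type.
Definition SigmaB (b q : nat) := ('I_b + 'I_q)%type.
Definition SigmaS (a b p q : nat) := (('I_a + 'I_b) + ('I_p * 'I_q))%type.

Section Segre.
Variables (a b p q : nat).

Definition tauA (x : 'I_a) : SigmaA a p := inl x.
Definition alphaA (i : 'I_p) : SigmaA a p := inr i.
Definition tauB (y : 'I_b) : SigmaB b q := inl y.
Definition betaB (j : 'I_q) : SigmaB b q := inr j.
Definition tau1S (x : 'I_a) : SigmaS a b p q := inl (inl x).
Definition tau2S (y : 'I_b) : SigmaS a b p q := inl (inr y).
Definition gammaS (ij : 'I_p * 'I_q) : SigmaS a b p q := inr ij.

(* Segre product: all words u_1 v_1 gamma_{i1,j1} ... u_d v_d gamma_{id,jd}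
   u_{d+1} v_{d+1} with u_1 alpha_{i1} ... u_{d+1} in L_A and
   v_1 beta_{j1} ... v_{d+1} in L_B.  The first d blocks are given by the
   lists us, vs, ijs (all of length d), the last by ul, vl. *)
Definition segre (LA : language (SigmaA a p)) (LB : language (SigmaB b q))
  : language (SigmaS a b p q) :=
  fun w => exists (us : seq (seq 'I_a)) (vs : seq (seq 'I_b))
                  (ijs : seq ('I_p * 'I_q)) (ul : seq 'I_a) (vl : seq 'I_b),
    [/\ size us = size ijs, size vs = size ijs,
        w = flatten [seq map tau1S t.1.1 ++ map tau2S t.1.2 ++ [:: gammaS t.2]
                    | t <- zip (zip us vs) ijs] ++ map tau1S ul ++ map tau2S vl,
        LA (flatten [seq map tauA t.1 ++ [:: alphaA t.2.1] | t <- zip us ijs]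
              ++ map tauA ul)
      & LB (flatten [seq map tauB t.1 ++ [:: betaB t.2.2] | t <- zip vs ijs]
              ++ map tauB vl)].

End Segre.

From Corelib Require Import Setoid.
From mathcomp Require Import all_boot.
Set Implicit Arguments. Unset Strict Implicit. Unset Printing Implicit Defensive.

(* A word over the Segre alphabet lies in the Segre product iff it has the block
   shape (tau1^* tau2^* gamma)^* tau1^* tau2^*, its projection to Sigma_A (erase
   the tau2-letters, send gamma_{i,j} to alpha_i) lies in L_A, and its projection
   to Sigma_B lies in L_B.  The shape is a regular expression, and regular
   languages are closed under inverse images of such letter-erasing projections
   and under intersection: both are plain automaton constructions, once Kleene's
   theorem translates between regular expressions and nondeterministic automata. *)

Section Star.
Variable T : eqType.
Implicit Types (P : seq T -> Prop) (u v w : seq T).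

Definition star P w := exists2 ws : seq (seq T), w = flatten ws & forall x, x \in ws -> P x.

Lemma star_nil P : star P [::].
Proof. by exists [::]. Qed.

Lemma star_cat P u v : P u -> star P v -> star P (u ++ v).
Proof.
move=> Pu [ws -> Pws]; exists (u :: ws) => // x.
by rewrite inE => /predU1P [-> | /Pws].
Qed.

Lemma star_ext P P' : (forall x, P x <-> P' x) -> forall w, star P w <-> star P' w.
Proof. by move=> PP' w; split=> -[ws -> Pws]; exists ws => // x /Pws /PP'. Qed.

Lemma star_consE P c w : star P (c :: w) ->
  exists u v, [/\ w = u ++ v, P (c :: u) & star P v].
Proof.
case=> ws; elim: ws => [|[|d u] ws IH] //= Ew Pws.
  by apply: IH => // x xws; apply: Pws; rewrite inE xws orbT.
case: Ew => -> ->; exists u, (flatten ws); split; first by [].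
  by apply: Pws; rewrite mem_head.
by exists ws => // x xws; apply: Pws; rewrite inE xws orbT.
Qed.

Lemma star_flatten_map (I : Type) (f : I -> seq T) w :
  star (fun x => exists i, x = f i) w <-> exists s : seq I, w = flatten (map f s).
Proof.
split=> [[ws -> fws] | [s ->]].
  elim: ws fws => [|x ws IH] fws; first by exists [::].
  have [i ->] := fws x (mem_head _ _).
  have [|s Ews] := IH; first by move=> y yws; apply: fws; rewrite inE yws orbT.
  by exists (i :: s); rewrite /= Ews.
elim: s => [|i s IH]; first exact: star_nil.
by apply: star_cat IH; exists i.
Qed.

Lemma rlang_star (r : regex T) w : rlang (RStar r) w <-> star (rlang r) w.
Proof.
split=> [[ws [-> rws]] | [ws -> rws]]; exists ws => //.
  by move=> x xws; rewrite -(nth_index [::] xws); apply: rws; rewrite index_mem.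
by split=> // k kws; apply: rws; apply: mem_nth.
Qed.

End Star.

Definition ralts (T : Type) (rs : seq (regex T)) : regex T := foldr (@RAlt T) RVoid rs.

Lemma rlang_ralts_map (T : Type) (I : eqType) (f : I -> regex T) (s : seq I) w :
  rlang (ralts (map f s)) w <-> exists2 i, i \in s & rlang (f i) w.
Proof.
elim: s => [|i s IH] /=; first by split=> // [[]].
split=> [[fiw | /IH [j js fjw]] | [j]].
- by exists i; rewrite ?mem_head.
- by exists j; rewrite // inE js orbT.
by rewrite inE => /predU1P [-> | js] fjw; [left | right; apply/IH; exists j].
Qed.

Definition letters_re (T : Type) (I : finType) (f : I -> T) : regex T :=
  ralts (map (fun i => RLit (f i)) (enum I)).

Lemma rlang_letters (T : Type) (I : finType) (f : I -> T) w :
  rlang (letters_re f) w <-> exists i, w = [:: f i].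
Proof.
split=> [/rlang_ralts_map [i _ ->] | [i ->]]; first by exists i.
by apply/rlang_ralts_map; exists i; rewrite ?mem_enum.
Qed.

Lemma rlang_star_letters (T : eqType) (I : finType) (f : I -> T) w :
  rlang (RStar (letters_re f)) w <-> exists s : seq I, w = map f s.
Proof.
rewrite rlang_star (star_ext (rlang_letters f)) star_flatten_map.
by split=> -[s ->]; exists s; rewrite flatten_map1.
Qed.

Record nfa (T : Type) := Nfa {
  nfa_state : finType;
  nfa_init : pred nfa_state;
  nfa_step : nfa_state -> T -> nfa_state -> bool;
  nfa_final : pred nfa_state }.

Arguments nfa_init {T N} : rename.
Arguments nfa_step {T N} : rename.
Arguments nfa_final {T N} : rename.

Fixpoint accepts (T : Type) (N : nfa T) (s : nfa_state N) (w : seq T) : Prop :=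
  if w is c :: w' then exists2 s', nfa_step s c s' & accepts s' w' else nfa_final s.

Definition nfa_lang (T : Type) (N : nfa T) : language T :=
  fun w => exists2 s : nfa_state N, nfa_init s & accepts s w.

Section RegexToNfa.
Variable T : eqType.
Implicit Types (w u v : seq T).

Definition nfa_void : nfa T := Nfa (fun _ : unit => false) (fun _ _ _ => false) (fun _ => false).

Lemma nfa_lang_void w : nfa_lang nfa_void w <-> rlang RVoid w.
Proof. by split=> // [[]]. Qed.

Definition nfa_eps : nfa T := Nfa (fun _ : unit => true) (fun _ _ _ => false) (fun _ => true).

Lemma nfa_lang_eps w : nfa_lang nfa_eps w <-> rlang REps w.
Proof.
case: w => [|c w]; split=> //; first by exists tt.
by case=> s _ [].
Qed.

Definition nfa_lit (c : T) : nfa T :=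
  Nfa negb (fun s x s' => ~~ s && s' && (x == c)) id.

Lemma nfa_lang_lit c w : nfa_lang (nfa_lit c) w <-> rlang (RLit c) w.
Proof.
split=> [[[] // _] | ->]; last by exists false => //; exists true; rewrite /= ?eqxx.
case: w => [|d [|e w]] //= [[] //= /eqP -> //] [[] //].
Qed.

Section Binary.
Variables N1 N2 : nfa T.

Definition nfa_alt : nfa T :=
  @Nfa T (nfa_state N1 + nfa_state N2)%type
    (fun s => match s with inl s => nfa_init s | inr s => nfa_init s end)
    (fun s c s' => match s, s' with
                   | inl s, inl s' => nfa_step s c s'
                   | inr s, inr s' => nfa_step s c s'
                   | _, _ => false end)
    (fun s => match s with inl s => nfa_final s | inr s => nfa_final s end).

Lemma accepts_alt_inl s w : accepts (inl s : nfa_state nfa_alt) w <-> accepts s w.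
Proof.
elim: w s => [|c w IH] s //=.
by split=> [[[s'|//] ? /IH]|[s' ? /IH]]; [exists s' | exists (inl s')].
Qed.

Lemma accepts_alt_inr s w : accepts (inr s : nfa_state nfa_alt) w <-> accepts s w.
Proof.
elim: w s => [|c w IH] s //=.
by split=> [[[//|s'] ? /IH]|[s' ? /IH]]; [exists s' | exists (inr s')].
Qed.

Lemma nfa_lang_alt w : nfa_lang nfa_alt w <-> nfa_lang N1 w \/ nfa_lang N2 w.
Proof.
split=> [[[s|s] /= ini_s]|[[s ini_s]|[s ini_s]]].
- by move/accepts_alt_inl; left; exists s.
- by move/accepts_alt_inr; right; exists s.
- by move/accepts_alt_inl; exists (inl s).
- by move/accepts_alt_inr; exists (inr s).
Qed.

(* A final state of [N1] may read the first letter of the [N2]-word as an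
   initial state of [N2] would; the empty [N2]-word is handled by [nfa_final]. *)
Definition nfa_cat : nfa T :=
  @Nfa T (nfa_state N1 + nfa_state N2)%type
    (fun s => if s is inl s then nfa_init s else false)
    (fun s c s' => match s, s' with
                   | inl s, inl s' => nfa_step s c s'
                   | inl s, inr s' => nfa_final s && [exists s0 : nfa_state N2, nfa_init s0 && nfa_step s0 c s']
                   | inr s, inr s' => nfa_step s c s'
                   | _, _ => false end)
    (fun s => match s with
              | inl s => nfa_final s && [exists s0 : nfa_state N2, nfa_init s0 && nfa_final s0]
              | inr s => nfa_final s end).

Lemma accepts_cat_inr s w : accepts (inr s : nfa_state nfa_cat) w <-> accepts s w.
Proof.
elim: w s => [|c w IH] s //=.
by split=> [[[//|s'] ? /IH]|[s' ? /IH]]; [exists s' | exists (inr s')].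
Qed.

Lemma accepts_cat_inl s w : accepts (inl s : nfa_state nfa_cat) w <->
  exists u v, [/\ w = u ++ v, accepts s u & nfa_lang N2 v].
Proof.
elim: w s => [|c w IH] s /=.
  split=> [/andP [fin_s /existsP [s0 /andP [ini_s0 fin_s0]]] | [u [v [Ew acc_u [s0 ini_s0]]]]].
    by exists [::], [::]; split=> //; exists s0.
  case: u v Ew acc_u => [|//] [|//] _ /= fin_s fin_s0.
  by rewrite fin_s; apply/existsP; exists s0; rewrite ini_s0.
split=> [[[s'|s'] /= step_s] | [[|d u] [v [/= Ew acc_u [s0 ini_s0 acc_v]]]]].
- by case/IH=> u [v [-> acc_u N2v]]; exists (c :: u), v; split=> //; exists s'.
- case/andP: step_s => fin_s /existsP [s0 /andP [ini_s0 step_s0]] /accepts_cat_inr acc_w.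
  by exists [::], (c :: w); split=> //; exists s0 => //; exists s'.
- subst v; case: acc_v => s' step_s0 /accepts_cat_inr acc_w.
  exists (inr s') => //=; rewrite acc_u /=; apply/existsP; exists s0.
  by rewrite ini_s0.
- case: Ew acc_u => -> Ew [s' step_s acc_u]; exists (inl s') => //.
  by apply/IH; exists u, v; split=> //; exists s0.
Qed.

Lemma nfa_lang_cat w :
  nfa_lang nfa_cat w <-> exists u v, [/\ w = u ++ v, nfa_lang N1 u & nfa_lang N2 v].
Proof.
split=> [[[s|//] /= ini_s /accepts_cat_inl [u [v [-> acc_u N2v]]]] | [u [v [-> [s ini_s acc_u] N2v]]]].
  by exists u, v; split=> //; exists s.
by exists (inl s) => //; apply/accepts_cat_inl; exists u, v.
Qed.

End Binary.

Section Iteration.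
Variable N : nfa T.

(* The fresh state [None] is the only initial state and accepts the empty word;
   a final state of [N] may restart [N]. *)
Definition nfa_star : nfa T :=
  @Nfa T (option (nfa_state N))
    (fun s => s == None)
    (fun s c s' => match s, s' with
                   | None, Some s' => [exists s0 : nfa_state N, nfa_init s0 && nfa_step s0 c s']
                   | Some s, Some s' =>
                       nfa_step s c s' || nfa_final s && [exists s0 : nfa_state N, nfa_init s0 && nfa_step s0 c s']
                   | _, None => false end)
    (fun s => if s is Some s then nfa_final s else true).

Lemma star_nfa_lang_cons c u v (s0 s' : nfa_state N) :
  nfa_init s0 -> nfa_step s0 c s' -> accepts s' u -> star (nfa_lang N) v ->
  star (nfa_lang N) (c :: u ++ v).
Proof.
move=> ini_s0 step_s0 acc_u Nv; rewrite -cat_cons.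
by apply: star_cat Nv; exists s0 => //; exists s'.
Qed.

Lemma accepts_star_Some s w : accepts (Some s : nfa_state nfa_star) w <->
  exists u v, [/\ w = u ++ v, accepts s u & star (nfa_lang N) v].
Proof.
elim: w s => [|c w IH] s /=.
  split=> [fin_s | [u [v [Ew acc_u _]]]]; first by exists [::], [::]; split=> //; apply: star_nil.
  by case: u v Ew acc_u => [|//] [|//].
split=> [[[s'|//] step_s /IH [u [v [-> acc_u Nv]]]] | [[|d u] [v [Ew acc_u Nv]]]].
- case/orP: step_s => [step_s | /andP [fin_s /existsP [s0 /andP [ini_s0 step_s0]]]].
    by exists (c :: u), v; split=> //; exists s'.
  by exists [::], (c :: u ++ v); split=> //; apply: star_nfa_lang_cons ini_s0 step_s0 acc_u Nv.
- rewrite /= in Ew; subst v; case/star_consE: Nv => x [rest [Ew [s0 ini_s0 [s' step_s0 acc_x]] Nrest]].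
  exists (Some s'); last by apply/IH; exists x, rest.
  by rewrite /= acc_u; apply/orP; right; apply/existsP; exists s0; rewrite ini_s0.
- case: Ew acc_u => -> Ew [s' step_s acc_u]; exists (Some s'); first by rewrite /= step_s.
  by apply/IH; exists u, v.
Qed.

Lemma nfa_lang_star w : nfa_lang nfa_star w <-> star (nfa_lang N) w.
Proof.
split=> [[[s|] //= _] | ].
  case: w => [_|c w [[s'|//] /existsP [s0 /andP [ini_s0 step_s0]]]]; first exact: star_nil.
  case/accepts_star_Some=> u [v [-> acc_u Nv]].
  exact: star_nfa_lang_cons ini_s0 step_s0 acc_u Nv.
move=> Nw; exists None => //; case: w Nw => [|c w] //.
case/star_consE=> x [rest [-> [s0 ini_s0 [s' step_s0 acc_x]] Nrest]].
exists (Some s'); first by apply/existsP; exists s0; rewrite ini_s0.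
by apply/accepts_star_Some; exists x, rest.
Qed.

End Iteration.

Lemma regex_nfa (r : regex T) : exists N : nfa T, forall w, nfa_lang N w <-> rlang r w.
Proof.
elim: r => [||c|r1 [N1 H1] r2 [N2 H2]|r1 [N1 H1] r2 [N2 H2]|r1 [N1 H1]].
- by exists nfa_void; apply: nfa_lang_void.
- by exists nfa_eps; apply: nfa_lang_eps.
- by exists (nfa_lit c); apply: nfa_lang_lit.
- by exists (nfa_alt N1 N2) => w; rewrite nfa_lang_alt H1 H2.
- exists (nfa_cat N1 N2) => w /=; split.
    by case/nfa_lang_cat=> u [v [-> /H1 r1u /H2 r2v]]; exists u, v.
  by case=> u [v [-> [/H1 N1u /H2 N2v]]]; apply/nfa_lang_cat; exists u, v.
- by exists (nfa_star N1) => w; rewrite nfa_lang_star (star_ext H1) rlang_star.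
Qed.

End RegexToNfa.

Section NfaToRegex.
Variables (T : finType) (N : nfa T).
Notation Q := (nfa_state N).
Implicit Types (X : seq Q) (q k : Q) (w : seq T).

(* [w] is nonempty; only the intermediate states, not the end points, are
   constrained to lie in [X]. *)
Fixpoint run_within X q w q' : Prop :=
  if w is c :: w' then
    (w' = [::] /\ nfa_step q c q') \/ exists m, [/\ nfa_step q c m, m \in X & run_within X m w' q']
  else False.

Definition step_re q q' : regex T :=
  ralts [seq if nfa_step q c q' then RLit c else RVoid | c <- enum T].

(* Paths through [k :: X] either avoid [k] or visit it a first and a last time. *)
Fixpoint within_re X q q' : regex T :=
  if X is k :: X' then
    RAlt (within_re X' q q')
         (RCat (within_re X' q k) (RCat (RStar (within_re X' k k)) (within_re X' k q')))
  else step_re q q'.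

Lemma run_within_nil q w q' : run_within [::] q w q' <-> exists2 c, w = [:: c] & nfa_step q c q'.
Proof.
case: w => [|c w] /=; first by split=> // [[]].
by split=> [[[-> ?] | [m []]] // | [d [-> ->] ?]]; [exists c | left].
Qed.

Lemma run_within_cons X k q w q' : run_within X q w q' -> run_within (k :: X) q w q'.
Proof.
elim: w q => [|c w IH] q //= [? | [m [? mX ?]]]; first by left.
by right; exists m; rewrite inE mX orbT; split=> //; apply: IH.
Qed.

Lemma run_within_cat X q u m v q' :
  run_within X q u m -> m \in X -> run_within X m v q' -> run_within X q (u ++ v) q'.
Proof.
elim: u q => [|c u IH] q //= [[-> ?] | [m' [? ? ?]]] mX ?; first by right; exists m.
by right; exists m'; split=> //; apply: IH.
Qed.

Lemma run_within_loops X k ws w q' : (forall x, x \in ws -> run_within X k x k) -> k \in X ->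
  run_within X k w q' -> run_within X k (flatten ws ++ w) q'.
Proof.
move=> + kX; elim: ws => [|x ws IH] //= loops run_w; rewrite -catA.
apply: run_within_cat kX _; first by apply: loops; rewrite mem_head.
by apply: IH => // y yws; apply: loops; rewrite inE yws orbT.
Qed.

Lemma run_withinE X k q w q' : run_within (k :: X) q w q' -> run_within X q w q' \/
  exists w1 w2 w3, [/\ w = w1 ++ w2 ++ w3, run_within X q w1 k,
                       star (fun x => run_within X k x k) w2 & run_within X k w3 q'].
Proof.
elim: w q => [|c w IH] q //= [? | [m [step_m + /IH run_w]]]; first by left; left.
rewrite inE => /predU1P [Emk | mX]; last case: run_w => [run_w | [w1 [w2 [w3 [-> run1 loops run3]]]]].
- subst m; case: run_w => [run_w | [w1 [w2 [w3 [-> run1 loops run3]]]]].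
    by right; exists [:: c], [::], w; split; [| left | apply: star_nil |].
  right; exists [:: c], (w1 ++ w2), w3; split; [by rewrite catA | by left | | by []].
  exact: star_cat.
- by left; right; exists m.
- by right; exists (c :: w1), w2, w3; split=> //; right; exists m.
Qed.

Lemma within_reP X q q' w : rlang (within_re X q q') w <-> run_within X q w q'.
Proof.
elim: X q q' w => [|k X IH] q q' w /=.
  split=> [/rlang_ralts_map [c _] | /run_within_nil [c -> step_c]].
    by case: ifP => // step_c ->; apply/run_within_nil; exists c.
  by apply/rlang_ralts_map; exists c; rewrite ?mem_enum // step_c.
split=> [[/IH | [w1 [w23 [-> [/IH run1 [w2 [w3 [-> [/rlang_star loops /IH run3]]]]]]]]] | ].
- exact: run_within_cons.
- apply: run_within_cat (run_within_cons k run1) (mem_head _ _) _.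
  case: loops => ws -> loops; apply: run_within_loops (mem_head _ _) (run_within_cons k run3).
  by move=> x /loops /IH /run_within_cons.
case/run_withinE=> [/IH | [w1 [w2 [w3 [-> run1 loops run3]]]]]; first by left.
right; exists w1, (w2 ++ w3); split=> //; split; first exact/IH.
exists w2, w3; split=> //; split; last exact/IH.
by apply/rlang_star/(star_ext (IH k k)).
Qed.

Lemma accepts_run q w : accepts q w <->
  (w = [::] /\ nfa_final q) \/ exists2 f, nfa_final f & run_within (enum Q) q w f.
Proof.
elim: w q => [|c w IH] q /=; first by split=> [|[[]|[]]]; [left|..].
split=> [[s step_s /IH [[-> fin_s] | [f fin_f run_w]]] | [[] // | [f fin_f]]].
- by right; exists s => //; left.
- by right; exists f => //; right; exists s; rewrite mem_enum.
case=> [[-> step_f] | [m [step_m _ run_w]]].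
  by exists f => //; apply/IH; left.
by exists m => //; apply/IH; right; exists f.
Qed.

Definition nfa_regex : regex T :=
  RAlt (if [exists s : Q, nfa_init s && nfa_final s] then REps else RVoid)
       (ralts [seq within_re (enum Q) sf.1 sf.2
              | sf <- enum [pred sf : Q * Q | nfa_init sf.1 && nfa_final sf.2]]).

Lemma nfa_regexP w : nfa_lang N w <-> rlang nfa_regex w.
Proof.
split=> [[s ini_s /accepts_run [[-> fin_s] | [f fin_f run_w]]] | [ | ]].
- by left; case: existsP => // -[]; exists s; apply/andP.
- right; apply/rlang_ralts_map; exists (s, f); last exact/within_reP.
  by rewrite mem_enum; apply/andP.
- by case: existsP => // -[s /andP [ini_s fin_s]] /= ->; exists s.
case/rlang_ralts_map=> -[s f]; rewrite mem_enum => /andP [ini_s fin_f] /within_reP run_w.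
by exists s => //; apply/accepts_run; right; exists f.
Qed.

End NfaToRegex.

Lemma nfa_regular (T : finType) (N : nfa T) : regular (nfa_lang N).
Proof. by exists (nfa_regex N); apply: nfa_regexP. Qed.

Lemma regular_ext (T : Type) (L1 L2 : language T) :
  (forall w, L1 w <-> L2 w) -> regular L1 -> regular L2.
Proof. by move=> L12 [r Lr]; exists r => w; rewrite -Lr; apply: iff_sym. Qed.

Definition nfa_inter (T : Type) (N1 N2 : nfa T) : nfa T :=
  @Nfa T (nfa_state N1 * nfa_state N2)%type
    (fun s => nfa_init s.1 && nfa_init s.2)
    (fun s c s' => nfa_step s.1 c s'.1 && nfa_step s.2 c s'.2)
    (fun s => nfa_final s.1 && nfa_final s.2).

Lemma accepts_inter (T : Type) (N1 N2 : nfa T) s1 s2 w :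
  accepts ((s1, s2) : nfa_state (nfa_inter N1 N2)) w <-> accepts s1 w /\ accepts s2 w.
Proof.
elim: w s1 s2 => [|c w IH] s1 s2 /=; first by split=> [/andP | [-> ->]].
split=> [[[t1 t2] /andP [step1 step2] /IH [acc1 acc2]] | [[t1 step1 acc1] [t2 step2 acc2]]].
  by split; [exists t1 | exists t2].
by exists (t1, t2); [rewrite /= step1 step2 | apply/IH].
Qed.

Lemma nfa_lang_inter (T : Type) (N1 N2 : nfa T) w :
  nfa_lang (nfa_inter N1 N2) w <-> nfa_lang N1 w /\ nfa_lang N2 w.
Proof.
split=> [[[s1 s2] /andP [ini1 ini2] /accepts_inter [acc1 acc2]] | [[s1 ini1 acc1] [s2 ini2 acc2]]].
  by split; [exists s1 | exists s2].
by exists (s1, s2); [rewrite /= ini1 ini2 | apply/accepts_inter].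
Qed.

Lemma regularI (T : finType) (L1 L2 : language T) :
  regular L1 -> regular L2 -> regular (fun w => L1 w /\ L2 w).
Proof.
move=> [r1 L1r] [r2 L2r]; have [N1 N1r] := regex_nfa r1; have [N2 N2r] := regex_nfa r2.
apply: regular_ext (nfa_regular (nfa_inter N1 N2)) => w.
by rewrite nfa_lang_inter L1r L2r N1r N2r.
Qed.

(* Letters sent to [None] by [h] are erased: the automaton stays put on them. *)
Definition nfa_preim (T U : Type) (h : U -> option T) (N : nfa T) : nfa U :=
  Nfa (@nfa_init _ N)
    (fun s c s' => if h c is Some x then nfa_step s x s' else s == s') nfa_final.

Lemma accepts_preim (T U : Type) (h : U -> option T) (N : nfa T) (s : nfa_state N) w :
  @accepts _ (nfa_preim h N) s w <-> accepts s (pmap h w).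
Proof.
elim: w s => [|c w IH] s //=; case: (h c) => [x|] /=.
  by split=> -[s' step_s /IH acc_w]; exists s'.
by split=> [[s' /eqP <- /IH] | /IH acc_w]; last exists s.
Qed.

Lemma regular_preim (T : eqType) (U : finType) (h : U -> option T) (L : language T) :
  regular L -> regular (fun w => L (pmap h w)).
Proof.
move=> [r Lr]; have [N Nr] := regex_nfa r.
apply: regular_ext (nfa_regular (nfa_preim h N)) => w.
rewrite Lr -Nr; split=> -[s ini_s /accepts_preim acc_w]; by exists s.
Qed.


Section Segre.
Variables a b p q : nat.
Notation SS := (SigmaS a b p q).
Notation tau1 := (@tau1S a b p q).
Notation tau2 := (@tau2S a b p q).
Notation gamma := (@gammaS a b p q).

Definition projA (c : SS) : option (SigmaA a p) :=
  match c with
  | inl (inl x) => Some (tauA p x)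
  | inl (inr _) => None
  | inr ij => Some (alphaA a ij.1)
  end.

Definition projB (c : SS) : option (SigmaB b q) :=
  match c with
  | inl (inl _) => None
  | inl (inr y) => Some (tauB q y)
  | inr ij => Some (betaB b ij.2)
  end.

Definition segre_block (t : seq 'I_a * seq 'I_b * ('I_p * 'I_q)) : seq SS :=
  map tau1 t.1.1 ++ map tau2 t.1.2 ++ [:: gamma t.2].

Definition segre_shape : language SS :=
  fun w => exists us vs ijs ul vl, [/\ size us = size ijs, size vs = size ijs &
    w = flatten (map segre_block (zip (zip us vs) ijs)) ++ map tau1 ul ++ map tau2 vl].

Lemma pmap_projA us vs ijs ul vl : size us = size ijs -> size vs = size ijs ->
  pmap projA (flatten (map segre_block (zip (zip us vs) ijs)) ++ map tau1 ul ++ map tau2 vl) =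
  flatten [seq map (tauA p) t.1 ++ [:: alphaA a t.2.1] | t <- zip us ijs] ++ map (tauA p) ul.
Proof.
have tau1K u : pmap projA (map tau1 u) = map (tauA p) u by elim: u => //= x u ->.
have tau2K v : pmap projA (map tau2 v) = [::] by elim: v.
move=> size_us size_vs; rewrite !pmap_cat tau1K tau2K cats0; congr (_ ++ _).
move: size_us size_vs.
elim: ijs us vs => [|ij ijs IH] [|u us] [|v vs] //= [size_us] [size_vs].
by rewrite /segre_block !pmap_cat tau1K tau2K IH // cats0 -catA.
Qed.

Lemma pmap_projB us vs ijs ul vl : size us = size ijs -> size vs = size ijs ->
  pmap projB (flatten (map segre_block (zip (zip us vs) ijs)) ++ map tau1 ul ++ map tau2 vl) =
  flatten [seq map (tauB q) t.1 ++ [:: betaB b t.2.2] | t <- zip vs ijs] ++ map (tauB q) vl.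
Proof.
have tau1K u : pmap projB (map tau1 u) = [::] by elim: u.
have tau2K v : pmap projB (map tau2 v) = map (tauB q) v by elim: v => //= y v ->.
move=> size_us size_vs; rewrite !pmap_cat tau1K tau2K; congr (_ ++ _).
move: size_us size_vs.
elim: ijs us vs => [|ij ijs IH] [|u us] [|v vs] //= [size_us] [size_vs].
by rewrite /segre_block !pmap_cat tau1K tau2K IH // -catA.
Qed.

Lemma segreE (LA : language (SigmaA a p)) (LB : language (SigmaB b q)) w :
  segre LA LB w <-> segre_shape w /\ LA (pmap projA w) /\ LB (pmap projB w).
Proof.
split=> [[us [vs [ijs [ul [vl [size_us size_vs Ew LAw LBw]]]]]] |].
  rewrite Ew pmap_projA // pmap_projB //; split=> //.
  by exists us, vs, ijs, ul, vl.
case=> -[us [vs [ijs [ul [vl [size_us size_vs Ew]]]]]].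
rewrite Ew pmap_projA // pmap_projB // => -[LAw LBw].
by exists us, vs, ijs, ul, vl.
Qed.

Definition segre_block_re : regex SS :=
  RCat (RStar (letters_re tau1)) (RCat (RStar (letters_re tau2)) (letters_re gamma)).

Definition segre_shape_re : regex SS :=
  RCat (RStar segre_block_re) (RCat (RStar (letters_re tau1)) (RStar (letters_re tau2))).

Lemma segre_block_reP x : rlang segre_block_re x <-> exists t, x = segre_block t.
Proof.
split=> [[x1 [x23 [-> [/rlang_star_letters [u ->]]]]] | [[[u v] ij] ->]].
  case=> x2 [x3 [-> [/rlang_star_letters [v ->] /rlang_letters [ij ->]]]].
  by exists (u, v, ij).
exists (map tau1 u), (map tau2 v ++ [:: gamma ij]); split=> //; split.
  by apply/rlang_star_letters; exists u.
exists (map tau2 v), [:: gamma ij]; split=> //; split; last by apply/rlang_letters; exists ij.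
by apply/rlang_star_letters; exists v.
Qed.

Lemma rlang_segre_blocks w :
  rlang (RStar segre_block_re) w <-> exists s, w = flatten (map segre_block s).
Proof. by rewrite rlang_star (star_ext segre_block_reP) star_flatten_map. Qed.

Lemma regular_segre_shape : regular segre_shape.
Proof.
exists segre_shape_re => w; split.
  case=> us [vs [ijs [ul [vl [size_us size_vs ->]]]]].
  exists (flatten (map segre_block (zip (zip us vs) ijs))), (map tau1 ul ++ map tau2 vl).
  split=> //; split; first by apply/rlang_segre_blocks; exists (zip (zip us vs) ijs).
  exists (map tau1 ul), (map tau2 vl); split=> //.
  by split; [apply/rlang_star_letters; exists ul | apply/rlang_star_letters; exists vl].
case=> w1 [w23 [-> [blocks [w2 [w3 [-> [/rlang_star_letters [ul ->] /rlang_star_letters [vl ->]]]]]]]].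
have /rlang_segre_blocks [s ->] : rlang (RStar segre_block_re) w1 := blocks.
exists (unzip1 (unzip1 s)), (unzip2 (unzip1 s)), (unzip2 s), ul, vl.
by rewrite !size_map !zip_unzip.
Qed.

End Segre.

Theorem theorem3p3 (a b p q : nat)
    (LA : language (SigmaA a p)) (LB : language (SigmaB b q)) :
  regular LA -> regular LB -> regular (segre LA LB).
Proof.
move=> regA regB; apply: regular_ext (fun w => iff_sym (segreE LA LB w)) _.
apply: regularI; first exact: regular_segre_shape.
by apply: regularI; apply: regular_preim.
Qed.
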